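(* Let $X_\ell$ be one of the affine types listed in the context and let $p:\{0,1,\dots,k-1\}\to I$ be a type $X_\ell$ path of length $k$. If $k>1$, then there is a unique directed walk in $B^{1,1}$ corresponding to $p$ (i.e. a unique sequence of $k$ consecutive arrows whose $t$-th arrow has color $p(t)$ for each $t$).
   Context: $I=\{0,1,\dots,\ell\}$ indexes the Dynkin nodes of the affine type $X_\ell$, one of $A^{(1)}_\ell$ ($\ell\ge2$), $C^{(1)}_\ell$ ($\ell\ge2$), $A^{(2)}_{2\ell}$ ($\ell\ge2$), $A^{(2)\dagger}_{2\ell}$ ($\ell\ge2$), $D^{(2)}_{\ell+1}$ ($\ell\ge2$), $D^{(1)}_\ell$ ($\ell\ge4$), $B^{(1)}_\ell$ ($\ell\ge3$), $A^{(2)}_{2\ell-1}$ ($\ell\ge3$). The Kirillov–Reshetikhin crystal $B^{1,1}$ of type $X_\ell$ is the following $I$-colored directed graph: $A^{(1)}_\ell$: a directed cycle with $\ell+1$ nodes whose successive arrows have colors $1,2,\dots,\ell,0$; $C^{(1)}_\ell$: directed cycle with $2\ell$ nodes, colors $1,\dots,\ell,\ell-1,\dots,1,0$; $A^{(2)}_{2\ell}$: cycle with $2\ell+1$ nodes, colors $1,\dots,\ell,\ell-1,\dots,1,0,0$; $A^{(2)\dagger}_{2\ell}$: cycle with $2\ell+1$ nodes, colors $1,\dots,\ell,\ell,\ell-1,\dots,1,0$; $D^{(2)}_{\ell+1}$: cycle with $2\ell+2$ nodes, colors $1,\dots,\ell,\ell,\ell-1,\dots,1,0,0$; $B^{(1)}_\ell$: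 nodes $u_1,\dots,u_\ell,z,\bar u_\ell,\dots,\bar u_1$ with arrows $u_t\xrightarrow{t}u_{t+1}$, $\bar u_{t+1}\xrightarrow{t}\bar u_t$ ($1\le t\le\ell-1$), $u_\ell\xrightarrow{\ell}z\xrightarrow{\ell}\bar u_\ell$, $\bar u_1\xrightarrow{0}u_2$, $\bar u_2\xrightarrow{0}u_1$; $A^{(2)}_{2\ell-1}$: as for $B^{(1)}_\ell$ but without $z$, with a single arrow $u_\ell\xrightarrow{\ell}\bar u_\ell$; $D^{(1)}_\ell$: nodes $u_1,\dots,u_{\ell-1},v,v',\bar u_{\ell-1},\dots,\bar u_1$ with arrows $u_t\xrightarrow{t}u_{t+1}$, $\bar u_{t+1}\xrightarrow{t}\bar u_t$ ($1\le t\le\ell-2$), $u_{\ell-1}\xrightarrow{\ell-1}v\xrightarrow{\ell}\bar u_{\ell-1}$, $u_{\ell-1}\xrightarrow{\ell}v'\xrightarrow{\ell-1}\bar u_{\ell-1}$, $\bar u_1\xrightarrow{0}u_2$, $\bar u_2\xrightarrow{0}u_1$. A type $X_\ell$ path of length $k$ is a function $p:\{0,\dots,k-1\}\to I$ such that there is a directed walk in $B^{1,1}$ whose $t$-th step is a $p(t)$-colored arrow. *)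

From mathcomp Require Import all_boot.
Set Implicit Arguments. Unset Strict Implicit. Unset Printing Implicit Defensive.

Inductive aff_type :=
| A1
| C1
| A2even    (* A^(2)_{2l}, l >= 2 *)
| A2evendag (* A^(2)dagger_{2l}, l >= 2 *)
| D2        (* D^(2)_{l+1}, l >= 2 *)
| D1
| B1
| A2odd.    (* A^(2)_{2l-1}, l >= 3 *)

Definition valid_rank (X : aff_type) (l : nat) : bool :=
  match X with
  | D1 => 4 <= l
  | B1 | A2odd => 3 <= l
  | _ => 2 <= l
  end.

(* Nodes of B^{1,1}: Cyc i is the i-th node of a directed cycle;
   U t = u_t, Ubar t = \bar u_t, Z = z, V = v, V' = v'. *)
Inductive node :=
| Cyc of nat
| U of nat
| Ubar of nat
| Z
| V
| V'.

Definition cycle_colors (X : aff_type) (l : nat) : seq nat :=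
  match X with
  | A1 => iota 1 l ++ [:: 0]
  | C1 => iota 1 l ++ rev (iota 1 l.-1) ++ [:: 0]
  | A2even => iota 1 l ++ rev (iota 1 l.-1) ++ [:: 0; 0]
  | A2evendag => iota 1 l ++ [:: l] ++ rev (iota 1 l.-1) ++ [:: 0]
  | D2 => iota 1 l ++ [:: l] ++ rev (iota 1 l.-1) ++ [:: 0; 0]
  | _ => [::]
  end.

Definition cycle_arrow (cs : seq nat) (v : node) (c : nat) (w : node) : Prop :=
  exists i, i < size cs /\ v = Cyc i /\ c = nth 0 cs i /\ w = Cyc (i.+1 %% size cs).

Definition arrow (X : aff_type) (l : nat) (v : node) (c : nat) (w : node) : Prop :=
  match X with
  | A1 | C1 | A2even | A2evendag | D2 => cycle_arrow (cycle_colors X l) v c w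
  | B1 =>
      (exists t, 1 <= t <= l - 1 /\ v = U t /\ c = t /\ w = U t.+1)
   \/ (exists t, 1 <= t <= l - 1 /\ v = Ubar t.+1 /\ c = t /\ w = Ubar t)
   \/ (v = U l /\ c = l /\ w = Z)
   \/ (v = Z /\ c = l /\ w = Ubar l)
   \/ (v = Ubar 1 /\ c = 0 /\ w = U 2)
   \/ (v = Ubar 2 /\ c = 0 /\ w = U 1)
  | A2odd =>
      (exists t, 1 <= t <= l - 1 /\ v = U t /\ c = t /\ w = U t.+1)
   \/ (exists t, 1 <= t <= l - 1 /\ v = Ubar t.+1 /\ c = t /\ w = Ubar t)
   \/ (v = U l /\ c = l /\ w = Ubar l)
   \/ (v = Ubar 1 /\ c = 0 /\ w = U 2)
   \/ (v = Ubar 2 /\ c = 0 /\ w = U 1)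
  | D1 =>
      (exists t, 1 <= t <= l - 2 /\ v = U t /\ c = t /\ w = U t.+1)
   \/ (exists t, 1 <= t <= l - 2 /\ v = Ubar t.+1 /\ c = t /\ w = Ubar t)
   \/ (v = U (l - 1) /\ c = l - 1 /\ w = V)
   \/ (v = V /\ c = l /\ w = Ubar (l - 1))
   \/ (v = U (l - 1) /\ c = l /\ w = V')
   \/ (v = V' /\ c = l - 1 /\ w = Ubar (l - 1))
   \/ (v = Ubar 1 /\ c = 0 /\ w = U 2)
   \/ (v = Ubar 2 /\ c = 0 /\ w = U 1)
  end.

(* A directed walk with k steps following p : {0..k-1} -> I = {0..l}, encoded
   by its k+1 visited nodes ws; step t is the arrow ws_t --p(t)--> ws_{t+1}.
   (B^{1,1} has no two parallel arrows of the same colour, so a walk is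
   determined by its node sequence together with p.) *)
Definition walk_for (X : aff_type) (l k : nat) (p : 'I_k -> 'I_l.+1)
    (ws : seq node) : Prop :=
  size ws = k.+1 /\
  forall t : 'I_k, arrow X l (nth Z ws t) (val (p t)) (nth Z ws t.+1).

Arguments walk_for X l k p ws : clear implicits.

Definition is_path (X : aff_type) (l k : nat) (p : 'I_k -> 'I_l.+1) : Prop :=
  exists ws, walk_for X l k p ws.

Arguments is_path X l k p : clear implicits.

From mathcomp Require Import all_boot zify.

Set Implicit Arguments.
Unset Strict Implicit.
Unset Printing Implicit Defensive.

(* In B^{1,1} every node has at most one outgoing and at most one incoming
   arrow of each colour, and each pair of colours (c, d) occurs at most at one
   node entered by a c-arrow and left by a d-arrow.  So the interior nodes of a
   walk with k > 1 steps are determined by its colours, and then so are the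
   two end nodes, through the first and the last arrow. *)

Section WalkUniqueness.
Variables (T : Type) (x0 : T) (R : T -> nat -> T -> Prop).

Hypothesis target_unique : forall v c w w', R v c w -> R v c w' -> w = w'.
Hypothesis source_unique : forall v v' c w, R v c w -> R v' c w -> v = v'.
Hypothesis middle_unique : forall v v' w w' x x' c d,
  R v c w -> R w d x -> R v' c w' -> R w' d x' -> w = w'.

Lemma walk_unique k (f : 'I_k -> nat) (ws ws' : seq T) : 1 < k ->
  size ws = k.+1 -> size ws' = k.+1 ->
  (forall t : 'I_k, R (nth x0 ws t) (f t) (nth x0 ws t.+1)) ->
  (forall t : 'I_k, R (nth x0 ws' t) (f t) (nth x0 ws' t.+1)) ->
  ws = ws'.
Proof.
move=> k_gt1 size_ws size_ws' walk walk'.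
have inner i : 0 < i < k -> nth x0 ws i = nth x0 ws' i.
  case: i => [|i] //= i_lt; have i_lt' : i < k by lia.
  exact: (middle_unique (walk (Ordinal i_lt')) (walk (Ordinal i_lt))
                        (walk' (Ordinal i_lt')) (walk' (Ordinal i_lt))).
have k_gt0 : 0 < k by lia.
have k1_lt : k.-1 < k by lia.
apply: (@eq_from_nth _ x0); first by rewrite size_ws size_ws'.
rewrite size_ws => -[|i] i_lt.
- apply: source_unique (walk (Ordinal k_gt0)) _.
  rewrite /= (inner 1); last lia.
  exact: (walk' (Ordinal k_gt0)).
- have [i_lt'|i_ge] := ltnP i.+1 k; first by apply: inner; lia.
  have -> : i.+1 = k.-1.+1 by lia.
  apply: target_unique (walk (Ordinal k1_lt)) _.
  rewrite /= (inner k.-1); last lia.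
  exact: (walk' (Ordinal k1_lt)).
Qed.

End WalkUniqueness.

Lemma modn_succ_lt i n : i < n -> i.+1 %% n = if i.+1 < n then i.+1 else 0.
Proof.
move=> i_lt; case: ltnP => [|n_le]; first exact: modn_small.
have -> : i.+1 = n by lia.
exact: modnn.
Qed.

Section CycleArrow.
Variable cs : seq nat.

Lemma cycle_arrow_target_unique v c w w' :
  cycle_arrow cs v c w -> cycle_arrow cs v c w' -> w = w'.
Proof. by move=> [i [_ [-> [-> ->]]]] [j [_ [[<-] [_ ->]]]]. Qed.

Lemma cycle_arrow_source_unique v v' c w :
  cycle_arrow cs v c w -> cycle_arrow cs v' c w -> v = v'.
Proof.
move=> [i [i_lt [-> [_ ->]]]] [j [j_lt [-> [_ [e]]]]].
by move: e; rewrite !modn_succ_lt //; do 2 case: ifP => ?; move=> ?; congr Cyc; lia.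
Qed.

Lemma cycle_arrow_middle_unique v v' w w' x x' c d :
  {in gtn (size cs) &, injective (fun i => (nth 0 cs i, nth 0 cs (i.+1 %% size cs)))} ->
  cycle_arrow cs v c w -> cycle_arrow cs w d x ->
  cycle_arrow cs v' c w' -> cycle_arrow cs w' d x' -> w = w'.
Proof.
move=> adj_inj [i [i_lt [_ [-> ->]]]] [j [_ [[<-] [-> _]]]].
move=> [i' [i'_lt [_ [c_eq ->]]]] [j' [_ [[<-] [d_eq _]]]].
by rewrite (adj_inj i i') //; rewrite c_eq d_eq.
Qed.

End CycleArrow.

Definition cycle_color (X : aff_type) (l i : nat) : nat :=
  match X with
  | A1 => if i < l then i.+1 else 0
  | C1 | A2even => if i < l then i.+1 else if i < 2 * l - 1 then 2 * l - 1 - i else 0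
  | A2evendag | D2 =>
      if i < l then i.+1 else if i == l then l else if i < 2 * l then 2 * l - i else 0
  | _ => 0
  end.

Lemma size_cycle_colors X l : 0 < l -> size (cycle_colors X l) =
  match X with
  | A1 => l.+1 | C1 => 2 * l | A2even | A2evendag => (2 * l).+1 | D2 => (2 * l).+2
  | _ => 0
  end.
Proof.
by move=> l_gt0; case: X => //=; rewrite !size_cat /= ?size_cat ?size_rev ?size_iota /=; lia.
Qed.

Lemma nth_cons0 (a : nat) s n : nth 0 (a :: s) n = if n == 0 then a else nth 0 s n.-1.
Proof. by case: n. Qed.

Lemma nth_cycle_colors X l i : 1 < l -> i < size (cycle_colors X l) ->
  nth 0 (cycle_colors X l) i = cycle_color X l i.
Proof.
move=> l_gt1; rewrite size_cycle_colors; last lia.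
case: X => //= i_lt; rewrite nth_cat size_iota.
all: case: ifP => ?; first by rewrite nth_iota ?add1n.
all: rewrite ?nth_cons0 ?nth_cat ?size_rev ?size_iota.
all: repeat (case: ifP => ?).
all: rewrite ?nth_rev ?size_iota ?nth_iota ?nth_cons0 //= ?nth_nil ?if_same; lia.
Qed.

Definition is_cycle_type (X : aff_type) : bool :=
  match X with B1 | A2odd | D1 => false | _ => true end.

Lemma arrow_cycle_type X l :
  is_cycle_type X -> arrow X l = cycle_arrow (cycle_colors X l).
Proof. by case: X. Qed.

Lemma cycle_colors_adjacent_inj X l : is_cycle_type X -> valid_rank X l ->
  let cs := cycle_colors X l in
  {in gtn (size cs) &, injective (fun i => (nth 0 cs i, nth 0 cs (i.+1 %% size cs)))}.
Proof.
move=> cycX rankX; have l_gt1 : 1 < l by case: X cycX rankX.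
move=> cs i j; rewrite !inE => i_lt j_lt []; subst cs.
rewrite !modn_succ_lt //.
have [si|si] := ltnP i.+1; have [sj|sj] := ltnP j.+1.
all: rewrite !nth_cycle_colors //; try lia.
all: move: i_lt j_lt si sj; rewrite /= size_cycle_colors; last lia.
all: case: X {cycX rankX} => //= ? ? ? ?.
all: do ! [case: ifP => ?; try (exfalso; lia)]; lia.
Qed.

Ltac destruct_arrow H :=
  repeat destruct H as [H|H];
  repeat match goal with
  | H : exists _, _ |- _ => destruct H
  | H : _ /\ _ |- _ => destruct H
  | H : U _ = U _ |- _ => injection H; clear H; intro H
  | H : Ubar _ = Ubar _ |- _ => injection H; clear H; intro H
  | H : ?x = _ |- _ => is_var x; subst x
  | H : _ = ?y |- _ => is_var y; subst y
  end; try discriminate; try (exfalso; lia).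

Section ArrowUniqueness.
Variables (X : aff_type) (l : nat).
Hypothesis rankX : valid_rank X l.

Lemma arrow_target_unique v c w w' : arrow X l v c w -> arrow X l v c w' -> w = w'.
Proof.
have [cycX|] := boolP (is_cycle_type X).
  by rewrite arrow_cycle_type //; apply: cycle_arrow_target_unique.
move: rankX; case: X => //= rk _ H1 H2; destruct_arrow H1; destruct_arrow H2;
  (reflexivity || (f_equal; lia)).
Qed.

Lemma arrow_source_unique v v' c w : arrow X l v c w -> arrow X l v' c w -> v = v'.
Proof.
have [cycX|] := boolP (is_cycle_type X).
  by rewrite arrow_cycle_type //; apply: cycle_arrow_source_unique.
move: rankX; case: X => //= rk _ H1 H2; destruct_arrow H1; destruct_arrow H2;
  (reflexivity || (f_equal; lia)).
Qed.

Lemma arrow_middle_unique v v' w w' x x' c d :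
  arrow X l v c w -> arrow X l w d x -> arrow X l v' c w' -> arrow X l w' d x' -> w = w'.
Proof.
have [cycX|] := boolP (is_cycle_type X).
  rewrite arrow_cycle_type //; apply: cycle_arrow_middle_unique.
  exact: cycle_colors_adjacent_inj.
move: rankX; case: X => //= rk _ H1 H2 H3 H4;
  destruct_arrow H1; destruct_arrow H2; destruct_arrow H3; destruct_arrow H4;
  (reflexivity || (f_equal; lia)).
Qed.

End ArrowUniqueness.

Theorem mainTheorem4 (X : aff_type) (l k : nat) (p : 'I_k -> 'I_l.+1) :
  valid_rank X l -> 1 < k -> is_path X l k p ->
  exists! ws : seq node, walk_for X l k p ws.
Proof.
move=> rankX k_gt1 [ws walk]; exists ws; split=> // ws' walk'.
case: walk walk' => size_ws steps [size_ws' steps'].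
exact: (walk_unique (arrow_target_unique rankX) (arrow_source_unique rankX)
          (arrow_middle_unique rankX) k_gt1 size_ws size_ws' steps steps').
Qed.
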